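(* For $n\le 3$ there is no $[[n,1,3;1]]$ entanglement-assisted stabilizer code (CSS or not): there do not exist $n$ independent pairwise commuting Pauli operators on $n+1$ qubits (qubits $1,\dots,n$ held by Alice, qubit $n+1$ held by Bob), exactly one acting as $X$ on Bob's qubit, exactly one as $Z$, and the rest trivially there, such that for every pair $E_a,E_b\in\{I\}\cup\{X_i,Y_i,Z_i:1\le i\le n\}$ of errors on Alice's qubits, $E_a^\dagger E_b$ either anticommutes with some generator or lies (up to phase) in the generated group.
   Context: $X,Y,Z$ are the single-qubit Pauli matrices and $P_i$ denotes the operator acting as $P$ on qubit $i$ and as identity elsewhere. *)

From mathcomp Require Import all_boot.
Set Implicit Arguments. Unset Strict Implicit. Unset Printing Implicit Defensive.

(* Single-qubit Pauli operators, taken up to a global phase. *)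
Inductive pauli := PI | PX | PY | PZ.

(* Product of single-qubit Paulis, up to phase (e.g. X*Y = iZ ~ Z). *)
Definition pmul (a b : pauli) : pauli :=
  match a, b with
  | PI, c | c, PI => c
  | PX, PX | PY, PY | PZ, PZ => PI
  | PX, PY | PY, PX => PZ
  | PY, PZ | PZ, PY => PX
  | PZ, PX | PX, PZ => PY
  end.

Definition panti (a b : pauli) : bool :=
  match a, b with
  | PI, _ | _, PI => false
  | PX, PX | PY, PY | PZ, PZ => false
  | _, _ => true
  end.

Definition pstr (m : nat) := 'I_m -> pauli.

Definition pid (m : nat) : pstr m := fun _ => PI.

Definition pstr_mul m (P Q : pstr m) : pstr m := fun q => pmul (P q) (Q q).

(* Equality up to phase: equality of the qubit-wise letters. *)
Definition pstr_eq m (P Q : pstr m) : Prop := forall q, P q = Q q.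

Definition pcommute m (P Q : pstr m) : bool :=
  ~~ odd #|[pred q : 'I_m | panti (P q) (Q q)]|.

Definition panticommute m (P Q : pstr m) : bool := ~~ pcommute P Q.

Definition gen_prod m k (g : 'I_k -> pstr m) (s : seq 'I_k) : pstr m :=
  foldr (fun j acc => pstr_mul (g j) acc) (@pid m) s.

Definition in_gen_group m k (g : 'I_k -> pstr m) (P : pstr m) : Prop :=
  exists s : seq 'I_k, pstr_eq (gen_prod g s) P.

Definition independent m k (g : 'I_k -> pstr m) : Prop :=
  forall S : {set 'I_k}, pstr_eq (gen_prod g (enum S)) (@pid m) -> S = set0.

(* Errors on Alice's qubits 0..n-1 (qubit ord_max = n is Bob's):
   the identity, or a single X_i, Y_i, Z_i with i an Alice qubit. *)
Definition alice_error n (E : pstr n.+1) : Prop :=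
  pstr_eq E (@pid n.+1) \/
  exists i : 'I_n.+1, i != ord_max /\
    E i <> PI /\ forall q, q != i -> E q = PI.

Definition EA_code_n13 n (g : 'I_n -> pstr n.+1) : Prop :=
  [/\ independent g,
      (forall i j, pcommute (g i) (g j)),
      (exists jx jz : 'I_n, [/\ g jx ord_max = PX, g jz ord_max = PZ &
          forall j, j != jx -> j != jz -> g j ord_max = PI]) &
      (forall Ea Eb : pstr n.+1, alice_error Ea -> alice_error Eb ->
         (* E_a^dagger E_b up to phase is the product of Ea and Eb *)
         (exists j, panticommute (pstr_mul Ea Eb) (g j)) \/
         in_gen_group g (pstr_mul Ea Eb))].

From HB Require Import structures.
From mathcomp Require Import all_boot.
Set Implicit Arguments. Unset Strict Implicit. Unset Printing Implicit Defensive.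

(* Write a Pauli letter as X^x Z^z: the map p |-> (x, z) identifies the letters
   with F_2^2, the product with addition and anticommutation with the
   symplectic form.  Hence a product of generators depends only on the parity
   with which each generator occurs, and Bob's letter of such a product is I
   exactly when the X- and Z-generators (the ones nontrivial on Bob's qubit)
   both occur an even number of times.  So every stabilizer element that is
   trivial on Bob's qubit is a product of the n - 2 "Bob-trivial" generators.

   For any two Alice qubits a, b, the 15 nontrivial errors supported on {a, b}
   have only 2^n <= 8 possible syndromes, so two of them collide and their
   product E is a nontrivial error on {a, b} commuting with every generator.
   Error correction forces E into the stabilizer, hence E is a nontrivial
   product of Bob-trivial generators.  For n = 2 there are none.  For n = 3
   there is exactly one, g_k, which must then be supported on each of the
   pairs {0,1}, {0,2}, {1,2}, hence trivial: a contradiction. *)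

Definition xbit (p : pauli) : bool := if p is PX then true else if p is PY then true else false.
Definition zbit (p : pauli) : bool := if p is PZ then true else if p is PY then true else false.
Definition of_bits (xz : bool * bool) : pauli :=
  match xz with
  | (false, false) => PI | (true, false) => PX | (true, true) => PY | (false, true) => PZ
  end.

Lemma bitsK : cancel (fun p => (xbit p, zbit p)) of_bits. Proof. by case. Qed.
Lemma of_bitsK : cancel of_bits (fun p => (xbit p, zbit p)). Proof. by case=> [[] []]. Qed.

HB.instance Definition _ := Finite.copy pauli (can_type bitsK).

Lemma card_pauli : #|{: pauli}| = 4.
Proof. by rewrite (bij_eq_card (Bijective bitsK of_bitsK)) card_prod card_bool. Qed.

Lemma pmulA : associative pmul. Proof. by do 3!case. Qed.
Lemma pmulC : commutative pmul. Proof. by do 2!case. Qed.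
Lemma pmul1 : left_id PI pmul. Proof. by []. Qed.

HB.instance Definition _ := Monoid.isComLaw.Build pauli PI pmul pmulA pmulC pmul1.

Lemma pmulxx (p : pauli) : pmul p p = PI. Proof. by case: p. Qed.

Lemma pmul_eq1 (p r : pauli) : (pmul p r == PI) = (p == r).
Proof. by case: p; case: r. Qed.

Lemma xbit_pmul (p r : pauli) : xbit (pmul p r) = xbit p (+) xbit r.
Proof. by case: p; case: r. Qed.

Lemma zbit_pmul (p r : pauli) : zbit (pmul p r) = zbit p (+) zbit r.
Proof. by case: p; case: r. Qed.

Lemma panti_pmull (p r x : pauli) : panti (pmul p r) x = panti p x (+) panti r x.
Proof. by case: p; case: r; case: x. Qed.

(* Since every letter is an involution, a power only depends on the parity. *)
Lemma iterop_pmul c (p : pauli) : iterop c pmul p PI = if odd c then p else PI.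
Proof.
rewrite Monoid.iteropE; elim: c => [|c IH] //=.
by rewrite IH; case: (odd c); rewrite /= ?pmulxx ?Monoid.mulm1.
Qed.

Lemma big_pmul_parity (I : finType) (s : seq I) (F : I -> pauli) :
  \big[pmul/PI]_(i <- s) F i = \big[pmul/PI]_(i | odd (count_mem i s)) F i.
Proof.
rewrite -big_undup_iterop_count big_uniq ?undup_uniq // [RHS]big_mkcond /=.
rewrite [RHS](bigID (mem (undup s))) /= [X in pmul _ X]big1 ?Monoid.mulm1.
  by apply: eq_bigr => i _; rewrite iterop_pmul.
by move=> i; rewrite mem_undup => /count_memPn ->.
Qed.

Lemma gen_prod_parity m k (g : 'I_k -> pstr m) s q :
  gen_prod g s q = \big[pmul/PI]_(j | odd (count_mem j s)) g j q.
Proof.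
rewrite -big_pmul_parity; elim: s => [|j s IH]; first by rewrite big_nil.
by rewrite big_cons /= /pstr_mul IH.
Qed.

Section TwoQubitErrors.
Variable m : nat.

Definition single (a : 'I_m) (p : pauli) : pstr m := fun q => if q == a then p else PI.

Definition pair_error (a : 'I_m) (p : pauli) (b : 'I_m) (r : pauli) : pstr m :=
  pstr_mul (single a p) (single b r).

Lemma pair_errorE a p b r q : a != b ->
  pair_error a p b r q = if q == a then p else if q == b then r else PI.
Proof.
move=> neq_ab; rewrite /pair_error /pstr_mul /single.
by case: (q =P a) => [->|_]; [rewrite (negbTE neq_ab); case: (p) | case: (q == b)].
Qed.

Lemma pcommute_pair_error a p b r (G : pstr m) : a != b ->
  pcommute (pair_error a p b r) G = (panti p (G a) == panti r (G b)).
Proof.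
move=> neq_ab; rewrite /pcommute (cardD1 a) (cardD1 b) !inE !pair_errorE //.
rewrite eqxx eq_sym (negbTE neq_ab) eqxx /=.
rewrite (_ : #|_| = 0) ?addn0; last first.
  by apply: eq_card0 => q; rewrite !inE pair_errorE //; case: (q =P b); case: (q =P a).
by case: (panti p _); case: (panti r _).
Qed.

End TwoQubitErrors.

Lemma alice_single n (a : 'I_n.+1) (p : pauli) : a != ord_max -> alice_error (single a p).
Proof.
move=> a_alice; case: (p =P PI) => [->|nz].
  by left => q; rewrite /single; case: (q == a).
right; exists a; split=> //; rewrite /single eqxx; split=> // q.
by move/negbTE ->.
Qed.

(* Pigeonhole in F_2^4: given k <= 3 generators (letters x i on qubit a and
   y i on qubit b), the 16 two-qubit errors have at most 2^k < 16 syndromes;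
   the product of two errors with equal syndrome is a nontrivial error
   commuting with every generator, by bilinearity of anticommutation. *)
Lemma two_qubit_commutant k (x y : 'I_k -> pauli) : k <= 3 ->
  exists p r, ((p != PI) || (r != PI)) /\ forall i, panti p (x i) = panti r (y i).
Proof.
move=> le_k3.
pose syndrome (pr : pauli * pauli) : {ffun 'I_k -> bool} :=
  [ffun i => panti pr.1 (x i) (+) panti pr.2 (y i)].
have : ~~ injectiveb syndrome.
  apply: contraL le_k3 => /injectiveP/leq_card.
  rewrite card_ffun card_bool card_ord card_prod card_pauli -ltnNge => le16.
  by rewrite -(ltn_exp2l _ _ (isT : 1 < 2)); apply: leq_trans le16.
case/injectivePn => [[p r] [[p' r'] neq same]].
exists (pmul p p'), (pmul r r'); split.
  by rewrite !pmul_eq1 -negb_and -xpair_eqE.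
move=> i; move/ffunP/(_ i): same; rewrite !ffunE /= !panti_pmull.
by case: (panti p _); case: (panti p' _); case: (panti r _); case: (panti r' _).
Qed.

Lemma alice_pair n i j : i < j < n ->
  [/\ inord i != inord j :> 'I_n.+1, inord i != @ord_max n & inord j != @ord_max n].
Proof.
case/andP=> lt_ij lt_jn; have lt_in := ltn_trans lt_ij lt_jn.
by rewrite -!val_eqE /= !inordK ?ltn_eqF // ltnS ltnW.
Qed.

Section BobQubit.
Variables (n : nat) (g : 'I_n -> pstr n.+1) (jx jz : 'I_n).
Hypotheses (gx : g jx ord_max = PX) (gz : g jz ord_max = PZ)
  (gI : forall j, j != jx -> j != jz -> g j ord_max = PI).

Definition bob_trivial : {set 'I_n} := [set j | g j ord_max == PI].

Lemma bob_letter j : g j ord_max = if j == jx then PX else if j == jz then PZ else PI.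
Proof.
case: (j =P jx) => [->//|/eqP nx]; case: (j =P jz) => [->//|/eqP nz].
exact: gI.
Qed.

Lemma jx_neq_jz : jx != jz.
Proof. by apply/eqP => e; move: gz; rewrite -e gx. Qed.

Lemma bob_trivialE : bob_trivial = ~: [set jx; jz].
Proof.
apply/setP => j; rewrite !inE bob_letter.
by case: (j =P jx) => [|_]; case: (j =P jz).
Qed.

Lemma card_bob_trivial : #|bob_trivial| + 2 = n.
Proof.
by rewrite bob_trivialE addnC; have := cardsC [set jx; jz]; rewrite cards2 jx_neq_jz card_ord.
Qed.

Lemma bob_parity s :
  xbit (gen_prod g s ord_max) = odd (count_mem jx s) /\
  zbit (gen_prod g s ord_max) = odd (count_mem jz s).
Proof.
elim: s => [|j s [IHx IHz]] //=.
rewrite /pstr_mul xbit_pmul zbit_pmul IHx IHz !oddD bob_letter.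
case: (j =P jx) => [->|_]; first by rewrite (negbTE jx_neq_jz).
by case: (j =P jz).
Qed.

Lemma odd_count_bob_trivial s : gen_prod g s ord_max = PI ->
  forall j, odd (count_mem j s) -> j \in bob_trivial.
Proof.
move=> bobI j odd_j; have [ex ez] := bob_parity s; rewrite bobI in ex ez.
rewrite bob_trivialE !inE negb_or.
by apply/andP; split; apply: contraTneq odd_j => ->; rewrite -?ex -?ez.
Qed.

Definition corrects_alice_errors : Prop :=
  forall Ea Eb : pstr n.+1, alice_error Ea -> alice_error Eb ->
    (exists j, panticommute (pstr_mul Ea Eb) (g j)) \/ in_gen_group g (pstr_mul Ea Eb).

Hypothesis corrects : corrects_alice_errors.

(* The error is chosen
   to commute with all n <= 3 generators; correction then puts it in the
   stabilizer, and parity forces it onto a single Bob-trivial generator. *)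
Lemma pair_error_is_generator : n <= 3 -> forall i j, i < j < n ->
  exists p r k, [/\ (p != PI) || (r != PI), k \in bob_trivial &
                    pstr_eq (g k) (pair_error (inord i) p (inord j) r)].
Proof.
move=> le_n3 i j /alice_pair[neq_ab a_alice b_alice].
set a : 'I_n.+1 := inord i in neq_ab a_alice *; set b : 'I_n.+1 := inord j in neq_ab b_alice *.
have [p [r [nontriv comm]]] := two_qubit_commutant (fun l => g l a) (fun l => g l b) le_n3.
have [s sE] : in_gen_group g (pair_error a p b r).
  case: (corrects (alice_single p a_alice) (alice_single r b_alice)) => [[k]|//].
  by rewrite /panticommute pcommute_pair_error // comm eqxx.
have bobI : gen_prod g s ord_max = PI.
  by rewrite sE pair_errorE // ![ord_max == _]eq_sym (negbTE a_alice) (negbTE b_alice).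
have odd_bob := odd_count_bob_trivial bobI.
have B_le1 : #|bob_trivial| <= 1 by rewrite -(leq_add2r 2) card_bob_trivial.
case: (pickP [pred k | odd (count_mem k s)]) => [k odd_k | all_even].
  exists p, r, k; split => //; first exact: odd_bob.
  move=> q; rewrite -sE gen_prod_parity (big_pred1 k) // => k' /=.
  apply/idP/eqP => [odd_k'|->//].
  by move/card_le1_eqP: B_le1 => /(_ _ _ (odd_bob _ odd_k') (odd_bob _ odd_k)).
have E1 q : pair_error a p b r q = PI by rewrite -sE gen_prod_parity big_pred0.
move: nontriv (E1 a) (E1 b); rewrite !pair_errorE // eqxx [b == a]eq_sym (negbTE neq_ab) eqxx.
by move=> /orP[] /eqP.
Qed.

End BobQubit.

Lemma triangle_support m (P : pstr m) (a0 a1 a2 : 'I_m) p1 r1 p2 r2 p3 r3 :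
  [&& a0 != a1, a0 != a2 & a1 != a2] -> (p1 != PI) || (r1 != PI) ->
  pstr_eq P (pair_error a0 p1 a1 r1) -> pstr_eq P (pair_error a0 p2 a2 r2) ->
  pstr_eq P (pair_error a1 p3 a2 r3) -> False.
Proof.
case/and3P=> n01 n02 n12 nontriv e1 e2 e3.
have n10 : a1 != a0 by rewrite eq_sym.
move: nontriv; have := e1 a0; rewrite pair_errorE // eqxx => <-.
have := e1 a1; rewrite pair_errorE // (negbTE n10) eqxx => <-.
have := e3 a0; rewrite pair_errorE // (negbTE n01) (negbTE n02) => ->.
have := e2 a1; rewrite pair_errorE // (negbTE n10) (negbTE n12) => ->.
by rewrite eqxx.
Qed.

Theorem mainTheorem8 (n : nat) : n <= 3 ->
  ~ exists g : 'I_n -> pstr n.+1, EA_code_n13 g.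
Proof.
move=> le_n3 [g [_ _ [jx [jz [gx gz gI]]] corrects]].
have card_B := card_bob_trivial gx gz gI.
have pair := pair_error_is_generator gx gz gI corrects le_n3.
have [B0|B1] : #|bob_trivial g| = 0 \/ #|bob_trivial g| = 1.
  have : #|bob_trivial g| <= 1 by rewrite -(leq_add2r 2) card_B.
  by case: #|_| => [|[|]]; auto.
  (* n = 2: there is no Bob-trivial generator at all. *)
  have lt01 : 0 < 1 < n by rewrite -card_B B0.
  have [p [r [k [_ kB _]]]] := pair 0 1 lt01.
  by rewrite (card0_eq B0) in kB.
(* n = 3: the unique Bob-trivial generator lives on each pair of Alice qubits. *)
have n3 : n = 3 by rewrite -card_B B1.
have lt01 : 0 < 1 < n by rewrite n3.
have lt02 : 0 < 2 < n by rewrite n3.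
have lt12 : 1 < 2 < n by rewrite n3.
have [p1 [r1 [k1 [nt1 B_k1 e1]]]] := pair 0 1 lt01.
have [p2 [r2 [k2 [_ B_k2 e2]]]] := pair 0 2 lt02.
have [p3 [r3 [k3 [_ B_k3 e3]]]] := pair 1 2 lt12.
have same k k' : k \in bob_trivial g -> k' \in bob_trivial g -> k = k'.
  by move=> kB k'B; move/card_le1_eqP: (eq_leq B1) => /(_ _ _ kB k'B).
rewrite -(same _ _ B_k1 B_k2) in e2; rewrite -(same _ _ B_k1 B_k3) in e3.
have [d01 _ _] := alice_pair lt01; have [d02 _ _] := alice_pair lt02.
have [d12 _ _] := alice_pair lt12.
by apply: triangle_support nt1 e1 e2 e3; rewrite d01 d02 d12.
Qed.
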